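(* Let $n\ge3$. For a Boolean algebra $\mathbf A$ let $\mathbf A^r$ be the algebra on $A$ with ternary operations $t_1(x,y,z)=x(y'+z)$, $t_h(x,y,z)=xz$ for $2\le h\le n-2$, $t_{n-1}(x,y,z)=z(y'+x)$. Let $\mathbf A_1=\mathbf A_2=\mathbf 4^r$ and $\mathbf A_3=\mathbf 2^r$, where $\mathbf 4$ and $\mathbf 2$ are the $4$- and $2$-element Boolean algebras (distinguished element $0$). Let $\mathbf D$ be an algebra with ternary operations $s_0,\dots,s_{n-2}$ and let $\mathbf A_4$ be the algebra on $D$ with operations $t_{i+1}=s_i$ ($0\le i\le n-2$); assume $t_1$ is the first projection, $t_{n-1}$ the third projection and $t_h(x,y,x)=x$ for $2\le h\le n-2$ in $\mathbf A_4$. For $a,d\in A_4$ let $\mathbf B(a,d)$ be the subalgebra of $\mathbf A_1\times\mathbf A_2\times\mathbf A_3\times\mathbf A_4$ whose universe is the set of elements of at least one of the forms $(\ast,0,\ast,a)$, $(0,0,\ast,\ast)$, $(0,\ast,\ast,d)$, $(\ast,\ast,0,\ast)$. (i) If $n$ is even and $s_0,\dots,s_{n-2}$ are J\'onsson operations for $\mathbf D$ (with $n-2$ in place of $n$), then for all $a,d$ the algebra $\mathbf B(a,d)$ is $n$-alvin (with operations $t_1,\dots,t_{n-1}$ together with the first and third projections as $t_0,t_n$). (ii) If for some $r$ and some congruences $\tilde\alpha,\tilde\beta,\tilde\gamma$ of $\mathbf A_4$ the inclusion $\tilde\alpha(\tilde\beta\circ\tilde\alpha\tilde\gamma\circ\tilde\beta)\subseteq\tilde\alpha\tilde\gamma\circ\tilde\alpha\tilde\beta\circ\stackrel{r}{\dots}$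 fails, then there are $a,d\in A_4$ and congruences $\alpha,\beta,\gamma$ of $\mathbf B(a,d)$ such that $\alpha(\beta\circ\alpha\gamma\circ\beta)\subseteq\alpha\beta\circ\alpha\gamma\circ\stackrel{r+2}{\dots}$ fails.
   Context: Boolean operations: juxtaposition (meet), $+$ (join), $'$ (complement). For relations juxtaposition is intersection and $\circ$ composition; $X\circ Y\circ\stackrel{k}{\dots}$ is the alternating composition $X\circ Y\circ X\circ\cdots$ with $k$ factors. J\'onsson (alvin) operations $t_0,\dots,t_n$: $t_0(x,y,z)=x$, $t_n(x,y,z)=z$, $t_h(x,y,x)=x$ for all $h$, $t_h(x,x,z)=t_{h+1}(x,x,z)$ for even $h$ and $t_h(x,z,z)=t_{h+1}(x,z,z)$ for odd $h$ (alvin: even/odd exchanged); an algebra is $n$-alvin if it has alvin terms $t_0,\dots,t_n$. *)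

From mathcomp Require Import all_boot.
Set Implicit Arguments. Unset Strict Implicit. Unset Printing Implicit Defensive.

(* The 2^k-element Boolean algebra is modelled as {set 'I_k}:
   meet = :&:, join = :|:, complement = ~:, zero = set0.
   Four := {set 'I_2} (4 elements), Two := {set 'I_1} (2 elements). *)
Definition Four := {set 'I_2}.
Definition Two := {set 'I_1}.

Definition tr (n h : nat) (T : finType) (x y z : {set T}) : {set T} :=
  if h == 1 then x :&: (~: y :|: z)
  else if h == n.-1 then z :&: (~: y :|: x)
  else x :&: z.

Definition Prod (D : Type) := (Four * Four * Two * D)%type.

Definition tP (n : nat) (D : Type) (s : nat -> D -> D -> D -> D) (h : nat)
  (u v w : Prod D) : Prod D :=
  (tr n h u.1.1.1 v.1.1.1 w.1.1.1,
   tr n h u.1.1.2 v.1.1.2 w.1.1.2,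
   tr n h u.1.2 v.1.2 w.1.2,
   s h.-1 u.2 v.2 w.2).

Definition tB (n : nat) (D : Type) (s : nat -> D -> D -> D -> D) (h : nat)
  (u v w : Prod D) : Prod D :=
  if h == 0 then u else if n <= h then w else tP n s h u v w.

Definition Bpred (D : Type) (a d : D) (u : Prod D) : Prop :=
  let: (x1, x2, x3, x4) := u in
  (x2 = set0 /\ x4 = a) \/ (x1 = set0 /\ x2 = set0) \/
  (x1 = set0 /\ x4 = d) \/ x3 = set0.

Definition jonsson (T : Type) (m : nat) (s : nat -> T -> T -> T -> T) : Prop :=
  forall x y z : T,
    s 0 x y z = x /\ s m x y z = z /\
    (forall h, h <= m -> s h x y x = x) /\
    (forall h, h < m -> ~~ odd h -> s h x x z = s h.+1 x x z) /\
    (forall h, h < m -> odd h -> s h x z z = s h.+1 x z z).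

Definition alvin_on (T : Type) (U : T -> Prop) (n : nat)
  (t : nat -> T -> T -> T -> T) : Prop :=
  forall x y z : T, U x -> U y -> U z ->
    t 0 x y z = x /\ t n x y z = z /\
    (forall h, h <= n -> t h x y x = x) /\
    (forall h, h < n -> odd h -> t h x x z = t h.+1 x x z) /\
    (forall h, h < n -> ~~ odd h -> t h x z z = t h.+1 x z z).

Definition congr_on (T : Type) (U : T -> Prop) (n : nat)
  (t : nat -> T -> T -> T -> T) (R : T -> T -> Prop) : Prop :=
  (forall x y, R x y -> U x /\ U y) /\
  (forall x, U x -> R x x) /\
  (forall x y, R x y -> R y x) /\
  (forall x y z, R x y -> R y z -> R x z) /\
  (forall h, 1 <= h <= n.-1 -> forall x x' y y' z z',
     R x x' -> R y y' -> R z z' -> R (t h x y z) (t h x' y' z')).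

Definition meetR (T : Type) (R S : T -> T -> Prop) : T -> T -> Prop :=
  fun x y => R x y /\ S x y.
Definition compR (T : Type) (R S : T -> T -> Prop) : T -> T -> Prop :=
  fun x y => exists z, R x z /\ S z y.
(* altR X Y k = X o Y o X o ... with k factors (k = 0: equality). *)
Fixpoint altR (T : Type) (X Y : T -> T -> Prop) (k : nat) : T -> T -> Prop :=
  match k with
  | 0 => fun x y => x = y
  | 1 => X
  | k'.+1 => compR X (altR Y X k')
  end.
Definition inclR (T : Type) (R S : T -> T -> Prop) : Prop :=
  forall x y, R x y -> S x y.

(* Part (i): alvin chains are inherited by products and subalgebras.  For even n
   the Boolean terms of A^r, padded by the two projections, form an alvin chain,
   and so do the shifted Jonsson terms s_(h-1) on D; B(a,d) is a subalgebra of
   the product of these.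

   Part (ii): if x al y and x be u (al ga) v be y witness the failure in A_4, put
   a := x, d := y and lift al, be, ga to B(x,y) by letting them look, on the
   Boolean coordinates, at A_3, at the first atom and at the second atom of
   A_1 x A_2 respectively.  Then (1,0,1,x) and (0,1,1,y) are related by
   al'(be' o al'ga' o be') through (e,0,0,u) and (0,e,0,v), e the first atom,
   while the shape of B(x,y) pins the last coordinate of the first and last
   inner points of any alternating al'be'/al'ga'-chain between them to x and y;
   removing the two end steps and projecting gives a chain of length r in A_4. *)

From mathcomp Require Import all_boot zify.
From Stdlib Require Import Classical.
Set Implicit Arguments. Unset Strict Implicit. Unset Printing Implicit Defensive.

Local Ltac set_tauto := apply/setP => ?; rewrite !inE; do ![case: (_ \in _)].

Section BooleanTerms.
Variables (n : nat) (T : finType).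
Implicit Types (x y z S : {set T}) (h : nat).

Lemma tr_xyx h x y : tr n h x y x = x.
Proof.
by rewrite /tr; do !case: ifP => _; set_tauto.
Qed.

Lemma tr_setIr h x y z S : tr n h x y z :&: S = tr n h (x :&: S) (y :&: S) (z :&: S).
Proof.
by rewrite /tr; do !case: ifP => _; set_tauto.
Qed.

Lemma tr_mid h x y z : h != 1 -> h != n.-1 -> tr n h x y z = x :&: z.
Proof. by rewrite /tr => /negbTE-> /negbTE->. Qed.

Lemma tr_xxz h x z : h != n.-1 -> tr n h x x z = x :&: z.
Proof.
rewrite /tr => /negbTE->; case: ifP => // _.
by set_tauto.
Qed.

Lemma tr_xzz h x z : h != 1 -> tr n h x z z = x :&: z.
Proof.
rewrite /tr => /negbTE->; case: ifP => // _.
by set_tauto.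
Qed.

Lemma tr_last_xxz x z : n.-1 != 1 -> tr n n.-1 x x z = z.
Proof.
rewrite /tr eqxx => /negbTE->.
by set_tauto.
Qed.

Lemma tr_first_xzz x z : tr n 1 x z z = x.
Proof. by rewrite /tr eqxx; set_tauto. Qed.

Lemma tr_set0l h y z : h != n.-1 -> tr n h set0 y z = set0.
Proof. by rewrite /tr => /negbTE->; case: ifP; rewrite set0I. Qed.

Lemma tr_set0r h x y : h != 1 -> tr n h x y set0 = set0.
Proof. by rewrite /tr => /negbTE->; case: ifP; rewrite ?set0I ?setI0. Qed.

End BooleanTerms.

Section AlvinTerms.
Variable n : nat.

Definition projext (T : Type) (t : nat -> T -> T -> T -> T) h x y z : T :=
  if h == 0 then x else if n <= h then z else t h x y z.

Definition prod_op (T1 T2 : Type) (t1 : nat -> T1 -> T1 -> T1 -> T1)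
    (t2 : nat -> T2 -> T2 -> T2 -> T2) h (u v w : T1 * T2) : T1 * T2 :=
  (t1 h u.1 v.1 w.1, t2 h u.2 v.2 w.2).

Lemma projext_mid (T : Type) (t : nat -> T -> T -> T -> T) h x y z :
  0 < h < n -> projext t h x y z = t h x y z.
Proof. by case/andP=> h0 hn; rewrite /projext (negbTE (lt0n_neq0 h0)) leqNgt hn. Qed.

Lemma alvin_on_sub (T : Type) (U : T -> Prop) (t : nat -> T -> T -> T -> T) :
  alvin_on (fun _ => True) n t -> alvin_on U n t.
Proof. by move=> A x y z _ _ _; exact: (A x y z I I I). Qed.

Lemma alvin_on_ext (T : Type) (U : T -> Prop) (t t' : nat -> T -> T -> T -> T) :
  (forall h x y z, t h x y z = t' h x y z) -> alvin_on U n t' -> alvin_on U n t.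
Proof.
move=> E A x y z Ux Uy Uz; have [first [last [xyx [xxz xzz]]]] := A x y z Ux Uy Uz.
split; first by rewrite E.
split; first by rewrite E.
split; first by move=> h hn; rewrite !E; apply: xyx.
split; first by move=> h hn oh; rewrite !E; apply: xxz.
by move=> h hn eh; rewrite !E; apply: xzz.
Qed.

Lemma alvin_prod (T1 T2 : Type) (t1 : nat -> T1 -> T1 -> T1 -> T1)
    (t2 : nat -> T2 -> T2 -> T2 -> T2) :
  alvin_on (fun _ => True) n t1 -> alvin_on (fun _ => True) n t2 ->
  alvin_on (fun _ => True) n (prod_op t1 t2).
Proof.
move=> A1 A2 [x1 x2] [y1 y2] [z1 z2] _ _ _; rewrite /prod_op /=.
have [first1 [last1 [xyx1 [xxz1 xzz1]]]] := A1 x1 y1 z1 I I I.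
have [first2 [last2 [xyx2 [xxz2 xzz2]]]] := A2 x2 y2 z2 I I I.
do !split; first by rewrite first1 first2.
- by rewrite last1 last2.
- by move=> h hn; rewrite xyx1 // xyx2.
- by move=> h hn oh; rewrite xxz1 // xxz2.
- by move=> h hn eh; rewrite xzz1 // xzz2.
Qed.

(* For odd n the chain breaks at the top: t_(n-1)(x,z,z) = xz, not z. *)
Lemma alvin_tr (T : finType) : 3 <= n -> ~~ odd n ->
  alvin_on (fun _ => True) n (projext (fun h => @tr n h T)).
Proof.
move=> n3 en x y z _ _ _; rewrite /projext eqxx leqnn.
have -> : (n == 0) = false by apply/eqP; lia.
split=> //; split=> //; split; [|split]=> h hn.
- by case: ifP => // _; case: ifP => // _; rewrite tr_xyx.
- move=> oh; have -> : (h == 0) = false by apply/eqP; lia.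
  rewrite leqNgt hn /=; case: leqP => [nh1|h1n].
    have -> : h = n.-1 by lia.
    by rewrite tr_last_xxz //; apply/eqP; lia.
  by rewrite !tr_xxz //; apply/eqP; lia.
- move=> eh; case: (posnP h) => [->|h0] /=.
    by rewrite leqNgt (_ : 1 < n) ?tr_first_xzz //; lia.
  rewrite leqNgt hn leqNgt (_ : h.+1 < n) /=; last by lia.
  by rewrite !tr_xzz //; apply/eqP; lia.
Qed.

Lemma alvin_jonsson (D : Type) (s : nat -> D -> D -> D -> D) :
  2 <= n -> jonsson (n - 2) s -> alvin_on (fun _ => True) n (projext (fun h => s h.-1)).
Proof.
move=> n2 J x y z _ _ _; rewrite /projext eqxx leqnn.
have -> : (n == 0) = false by apply/eqP; lia.
have [_ [_ [xyx _]]] := J x y x.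
have [_ [last_xxz [_ [xxz _]]]] := J x x z.
have [first_xzz [last_xzz [_ [_ xzz]]]] := J x z z.
split=> //; split=> //; split; [|split]=> h hn.
- by case: ifP => // /eqP h0; case: ifP => // /negbT nh; rewrite xyx //; lia.
- move=> oh; have -> : (h == 0) = false by apply/eqP; lia.
  rewrite leqNgt hn /=; case: leqP => [nh1|h1n].
    by have -> : h.-1 = n - 2 by lia.
  by rewrite xxz ?prednK //; lia.
- move=> eh; case: (posnP h) => [->|h0] /=.
    by rewrite leqNgt (_ : 1 < n) ?first_xzz //; lia.
  rewrite leqNgt hn /=; case: leqP => [nh1|h1n].
    by have -> : h.-1 = n - 2 by lia.
  by rewrite xzz ?prednK //; lia.
Qed.

End AlvinTerms.

Lemma tB_prod_op n D (s : nat -> D -> D -> D -> D) h u v w :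
  tB n s h u v w =
  prod_op (prod_op (prod_op (projext n (fun h => @tr n h 'I_2))
                            (projext n (fun h => @tr n h 'I_2)))
                   (projext n (fun h => @tr n h 'I_1)))
          (projext n (fun h => s h.-1)) h u v w.
Proof.
case: u w => [[[? ?] ?] ?] [[[? ?] ?] ?].
by rewrite /tB /prod_op /projext /=; case: (h == 0); case: (n <= h).
Qed.

Lemma tB_mid n D (s : nat -> D -> D -> D -> D) h u v w :
  0 < h < n -> tB n s h u v w = tP n s h u v w.
Proof. exact: projext_mid. Qed.

Lemma alvin_B n D (s : nat -> D -> D -> D -> D) (a d : D) :
  3 <= n -> ~~ odd n -> jonsson (n - 2) s -> alvin_on (Bpred a d) n (tB n s).
Proof.
move=> n3 en J; apply/alvin_on_sub/(alvin_on_ext (tB_prod_op n s)).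
by do !apply: alvin_prod; [exact: alvin_tr..|apply: alvin_jonsson => //; lia].
Qed.

Section AltChains.
Variable T : Type.
Implicit Types X Y : T -> T -> Prop.

Lemma altR_split_first X Y k p q :
  altR X Y k.+1 p q -> exists z, X p z /\ altR Y X k z q.
Proof. by case: k => [|k] /=; [exists q|]. Qed.

Lemma altR_split_last k X Y p q :
  altR X Y k.+1 p q -> exists z, altR X Y k p z /\ (if odd k then Y else X) z q.
Proof.
elim: k X Y p => [|k IH] X Y p /=; first by exists p.
case=> z [Xpz /IH [w [Ypw Xwq]]]; exists w; split; last by case: (odd k) Xwq.
by case: k {IH Xwq} Ypw => [|k] /= Ypw; [rewrite -Ypw|exists z].
Qed.

Lemma not_inclR X Y : ~ inclR X Y -> exists p q, X p q /\ ~ Y p q.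
Proof.
move=> nXY; apply: NNPP => none; apply: nXY => p q Xpq.
by apply: NNPP => nYpq; apply: none; exists p, q.
Qed.

Lemma altR_map (U : Type) (f : T -> U) k X Y (X' Y' : U -> U -> Prop) :
  (forall p q, X p q -> X' (f p) (f q)) -> (forall p q, Y p q -> Y' (f p) (f q)) ->
  forall p q, altR X Y k p q -> altR X' Y' k (f p) (f q).
Proof.
elim: k X Y X' Y' => [|k IH] X Y X' Y' fX fY p q; first by move=> /= ->.
case/altR_split_first=> z [Xpz /(IH _ _ _ _ fY fX)].
by case: k {IH} => [|k] /= => [<-|]; [exact: fX|exists (f z); split; first exact: fX].
Qed.

End AltChains.

Section Subalgebra.
Variables (n : nat) (D : Type) (s : nat -> D -> D -> D -> D).
Hypotheses (n3 : 3 <= n) (s_first : forall x y z : D, s 0 x y z = x)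
  (s_last : forall x y z : D, s (n - 2) x y z = z)
  (s_xyx : forall h, 2 <= h <= n - 2 -> forall x y : D, s h.-1 x y x = x).

Lemma Bpred_tP a d h u v w : 1 <= h <= n.-1 ->
  Bpred a d u -> Bpred a d v -> Bpred a d w -> Bpred a d (tP n s h u v w).
Proof.
case: u v w => [[[u1 u2] u3] u4] [[[v1 v2] v3] v4] [[[w1 w2] w3] w4] hn.
rewrite /tP /Bpred /=; have [->|h1] := eqVneq h 1.
  rewrite s_first => Bu _ _.
  have h1 : 1 != n.-1 by apply/eqP; lia.
  by case: Bu => [[-> ->]|[[-> ->]|[[-> ->]|->]]]; rewrite ?tr_set0l //; tauto.
have [->|hn1] := eqVneq h n.-1.
  rewrite (_ : n.-1.-1 = n - 2) ?s_last => [_ _ Bw|]; last by lia.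
  have n1 : n.-1 != 1 by apply/eqP; lia.
  by case: Bw => [[-> ->]|[[-> ->]|[[-> ->]|->]]]; rewrite ?tr_set0r //; tauto.
rewrite !tr_mid // => Bu _ Bw.
case: Bu => [[-> ->]|[[-> ->]|[[-> ->]|->]]];
case: Bw => [[-> ->]|[[-> ->]|[[-> ->]|->]]];
  rewrite ?set0I ?setI0 ?s_xyx; try lia; tauto.
Qed.

Definition Bcong a d (S1 S2 : {set 'I_2}) (S3 : {set 'I_1}) (R : D -> D -> Prop)
    (p q : Prod D) : Prop :=
  [/\ Bpred a d p, Bpred a d q,
      [/\ p.1.1.1 :&: S1 = q.1.1.1 :&: S1, p.1.1.2 :&: S2 = q.1.1.2 :&: S2
         & p.1.2 :&: S3 = q.1.2 :&: S3]
    & R p.2 q.2].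

Lemma Bcong_congr a d S1 S2 S3 R :
  congr_on (fun _ => True) n (fun h => s h.-1) R ->
  congr_on (Bpred a d) n (tB n s) (Bcong a d S1 S2 S3 R).
Proof.
case=> _ [Rrefl [Rsym [Rtrans Rcomp]]].
split; first by move=> p q [].
split; first by move=> p Bp; split=> //; apply: Rrefl.
split; first by move=> p q [? ? [? ? ?] ?]; split=> //; apply: Rsym.
split.
  move=> p q r [Bp _ [E1 E2 E3] Rpq] [_ Br [F1 F2 F3] Rqr].
  split; [exact: Bp|exact: Br| |exact: Rtrans Rpq Rqr].
  by split; [rewrite E1|rewrite E2|rewrite E3].
move=> h hn p p' q q' r r' [Bp Bp' [P1 P2 P3] P4] [Bq Bq' [Q1 Q2 Q3] Q4]
  [Br Br' [R1 R2 R3] R4].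
have h0 : 0 < h < n by lia.
rewrite !tB_mid //; split; [exact: Bpred_tP..| |exact: Rcomp].
by split; rewrite /tP /= tr_setIr ?P1 ?P2 ?P3 ?Q1 ?Q2 ?Q3 ?R1 ?R2 ?R3 -tr_setIr.
Qed.

Lemma Bpred_eq_a a d (w : Prod D) :
  Bpred a d w -> w.1.2 != set0 -> w.1.1.1 != set0 -> w.2 = a.
Proof.
by case: w => [[[w1 w2] w3] w4] /= [[_ ->]|[[-> _]|[[-> _]|->]]]; rewrite ?eqxx.
Qed.

Lemma Bpred_eq_d a d (w : Prod D) :
  Bpred a d w -> w.1.2 != set0 -> w.1.1.2 != set0 -> w.2 = d.
Proof.
by case: w => [[[w1 w2] w3] w4] /= [[-> _]|[[_ ->]|[[_ ->]|->]]]; rewrite ?eqxx.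
Qed.

Section Witness.
Variables (al be ga : D -> D -> Prop) (x y : D).

Definition alB := Bcong x y set0 set0 setT al.
Definition beB := Bcong x y [set ord0] [set ord0] set0 be.
Definition gaB := Bcong x y [set ord_max] [set ord_max] set0 ga.
Definition xB : Prod D := (setT, set0, setT, x).
Definition yB : Prod D := (set0, setT, setT, y).

Lemma witness_lift u v : al x y -> be x u -> al u v -> ga u v -> be v y ->
  meetR alB (compR beB (compR (meetR alB gaB) beB)) xB yB.
Proof.
move=> al_xy be_xu al_uv ga_uv be_vy.
pose uB : Prod D := ([set ord0], set0, set0, u).
pose vB : Prod D := (set0, [set ord0], set0, v).
have Bx : Bpred x y xB by left.
have By : Bpred x y yB by right; right; left.
have Bu : Bpred x y uB by right; right; right.
have Bv : Bpred x y vB by right; right; right.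
have atoms0 : [set ord0] :&: [set ord_max] = set0 :> {set 'I_2}.
  by apply/setP => i; rewrite !inE; case: i => [[|[|]] ?].
split; [split=> //; by split; rewrite /= ?setI0|].
exists uB; split; [split=> //; by split; rewrite /= ?setTI ?setIid ?setI0|].
exists vB; split; last by split=> //; split; rewrite /= ?setTI ?setIid ?setI0.
by split; split=> //; split; rewrite /= ?setI0 ?set0I ?atoms0.
Qed.

(* Points alB-related to xB or yB have full A_3-coordinate, so membership in
   B(x,y) forces their last coordinate to be x when the A_1-coordinate is
   nonzero and y when the A_2-coordinate is nonzero. *)
Lemma witness_project r :
  altR (meetR alB beB) (meetR alB gaB) r.+2 xB yB ->
  altR (meetR al ga) (meetR al be) r x y.
Proof.
have atom_neq0 (i : 'I_2) : [set i] != set0.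
  by apply/eqP => /setP/(_ i); rewrite !inE eqxx.
have full_neq0 : [set: 'I_1] != set0 by apply/set0Pn; exists ord0.
move=> chainB; have [w1 [[al_xw1 be_xw1] chain1]] := altR_split_first chainB.
have [w [chain last_step]] := altR_split_last chain1.
have w1x : w1.2 = x.
  move: al_xw1 be_xw1 => [_ Bw1 [_ _ E3] _] [_ _ [E1 _ _] _].
  apply: (Bpred_eq_a Bw1); first by move: E3; rewrite /= !setIT => <-.
  apply: contraNneq (atom_neq0 ord0) => w0.
  by move: E1; rewrite /= w0 setTI set0I => ->.
have wy : w.2 = y.
  have [Bw w3 w2] : [/\ Bpred x y w, w.1.2 = setT & w.1.1.2 != set0].
    case: (odd r) last_step => -[[Bw _ [_ _ E3] _] [_ _ [_ E2 _] _]];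
      (split=> //; first by move: E3; rewrite /= !setIT);
      [apply: contraNneq (atom_neq0 ord0)|apply: contraNneq (atom_neq0 ord_max)];
      by move=> w0; move: E2; rewrite /= w0 setTI set0I => ->.
  by apply: (Bpred_eq_d Bw); rewrite // w3.
rewrite -w1x -wy; apply: altR_map chain.
  by move=> p q [[_ _ _ ?] [_ _ _ ?]].
by move=> p q [[_ _ _ ?] [_ _ _ ?]].
Qed.

End Witness.

Lemma B_incl_failure r (al be ga : D -> D -> Prop) :
  congr_on (fun _ => True) n (fun h => s h.-1) al ->
  congr_on (fun _ => True) n (fun h => s h.-1) be ->
  congr_on (fun _ => True) n (fun h => s h.-1) ga ->
  ~ inclR (meetR al (compR be (compR (meetR al ga) be)))
          (altR (meetR al ga) (meetR al be) r) ->
  exists (a d : D) (al' be' ga' : Prod D -> Prod D -> Prop),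
    congr_on (Bpred a d) n (tB n s) al' /\
    congr_on (Bpred a d) n (tB n s) be' /\
    congr_on (Bpred a d) n (tB n s) ga' /\
    ~ inclR (meetR al' (compR be' (compR (meetR al' ga') be')))
            (altR (meetR al' be') (meetR al' ga') (r + 2)).
Proof.
move=> Cal Cbe Cga /not_inclR
  [x [y [[al_xy [u [be_xu [v [[al_uv ga_uv] be_vy]]]]] not_r]]].
exists x, y, (alB al x y), (beB be x y), (gaB ga x y).
split; first exact: Bcong_congr.
split; first exact: Bcong_congr.
split; first exact: Bcong_congr.
move=> incl; apply/not_r/witness_project; rewrite -addn2; apply: incl.
exact: witness_lift be_xu al_uv ga_uv be_vy.
Qed.

End Subalgebra.

Theorem theorem3p9 (n : nat) (Hn : 3 <= n) (D : Type)
  (s : nat -> D -> D -> D -> D)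
  (Ht1 : forall x y z : D, s 0 x y z = x)
  (Htn1 : forall x y z : D, s (n - 2) x y z = z)
  (Hth : forall h, 2 <= h <= n - 2 -> forall x y : D, s h.-1 x y x = x) :
  (~~ odd n -> jonsson (n - 2) s ->
     forall a d : D, alvin_on (Bpred a d) n (tB n s))
  /\
  (forall r : nat, 0 < r ->
   forall al be ga : D -> D -> Prop,
     congr_on (fun _ => True) n (fun h => s h.-1) al ->
     congr_on (fun _ => True) n (fun h => s h.-1) be ->
     congr_on (fun _ => True) n (fun h => s h.-1) ga ->
     ~ inclR (meetR al (compR be (compR (meetR al ga) be)))
             (altR (meetR al ga) (meetR al be) r) ->
     exists (a d : D) (al' be' ga' : Prod D -> Prod D -> Prop),
       congr_on (Bpred a d) n (tB n s) al' /\
       congr_on (Bpred a d) n (tB n s) be' /\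
       congr_on (Bpred a d) n (tB n s) ga' /\
       ~ inclR (meetR al' (compR be' (compR (meetR al' ga') be')))
               (altR (meetR al' be') (meetR al' ga') (r + 2))).
Proof.
split; first by move=> en J a d; exact: alvin_B.
by move=> r _; exact: B_incl_failure.
Qed.
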